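(* Let $w_c, w_r \in \mathbb{N}$ with $w_c \le w_r$, and let $G$ be a finite simple $(w_c,w_r)$-regular bipartite graph with parts $\mathcal{V}_c$ and $\mathcal{V}_r$, where $n = |\mathcal{V}_c|$ and $m = |\mathcal{V}_r|$ (so $m \le n$, i.e. $\mathcal{V}_r$ is the smaller part). If $G$ has girth $8$, then $$ m \;\ge\; \frac{-w_c(w_c-2) + w_c\sqrt{(w_c-2)^2 + 4(w_c-1)n}}{2}. $$
   Context: A $(w_c,w_r)$-regular bipartite graph is a bipartite graph with parts $\mathcal{V}_c$ (''variable nodes'') and $\mathcal{V}_r$ (''check nodes'') such that every vertex of $\mathcal{V}_c$ has degree $w_c$ and every vertex of $\mathcal{V}_r$ has degree $w_r$; in particular $w_c n = w_r m$. The girth of a graph is the length of its shortest cycle. *)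

From mathcomp Require Import all_boot all_order all_algebra.
Set Implicit Arguments. Unset Strict Implicit. Unset Printing Implicit Defensive.

(* A bipartite graph with parts Vc (variable nodes) and Vr (check nodes) is
   given by its adjacency e : Vc -> Vr -> bool (simple: at most one edge
   between a pair; edges only across parts). *)
Definition bip_adj (Vc Vr : finType) (e : Vc -> Vr -> bool) : rel (Vc + Vr) :=
  fun x y => match x, y with
             | inl a, inr b => e a b
             | inr b, inl a => e a b
             | _, _ => false
             end.

Definition biregular (Vc Vr : finType) (e : Vc -> Vr -> bool) (wc wr : nat) :=
  (forall v : Vc, #|[set r : Vr | e v r]| = wc) /\
  (forall r : Vr, #|[set v : Vc | e v r]| = wr).

Definition is_cycle (T : finType) (g : rel T) (s : seq T) : bool :=
  (3 <= size s) && uniq s && cycle g s.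

Definition girth_eq (T : finType) (g : rel T) (k : nat) : Prop :=
  (exists s, is_cycle g s /\ size s = k) /\
  (forall s, is_cycle g s -> k <= size s).

From mathcomp Require Import all_boot all_order all_algebra.
From mathcomp Require Import ring lra.
Set Implicit Arguments. Unset Strict Implicit. Unset Printing Implicit Defensive.
Import Order.TTheory GRing.Theory Num.Theory.

(* Fix a variable node v0. Its wc neighbours are checks, and the non-backtracking
   walks v0 - c - v - r number wc (wr - 1) (wc - 1). Since there are no 4- and
   6-cycles, distinct such walks end at distinct checks r, none of which is a
   neighbour of v0; hence m >= wc + wc (wr - 1) (wc - 1). Substituting
   wr = wc n / m (double counting of edges) turns this into a quadratic
   inequality in m, whose positive root is the claimed bound. *)

Lemma card_setD1_pred (T : finType) (A : pred T) x :
  A x -> #|[set y | (y != x) && A y]| = #|[set y | A y]| - 1.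
Proof.
move=> Ax; rewrite (cardsD1 x [set y | A y]) inE Ax add1n subSS subn0.
by apply: eq_card => y; rewrite !inE.
Qed.

Lemma sum_nat_const_dep (T : finType) (P : pred T) n :
  \sum_(x | P x) n = #|[set x | P x]| * n.
Proof. by rewrite -sum_nat_const; apply: eq_bigl => x; rewrite inE. Qed.

Section BipartiteGirth.
Variables (Vc Vr : finType) (e : Vc -> Vr -> bool).
Local Notation G := (bip_adj e).

Lemma bip_cycle4 v1 v2 c1 c2 :
  v1 != v2 -> c1 != c2 -> e v1 c1 -> e v2 c1 -> e v2 c2 -> e v1 c2 ->
  is_cycle G [:: inl v1; inr c1; inl v2; inr c2].
Proof.
move=> nv nc e11 e21 e22 e12.
by rewrite /is_cycle /= !inE -!sum_eqE /= e11 e21 e22 e12 orbF nv nc.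
Qed.

Lemma bip_cycle6 v1 v2 v3 c1 c2 c3 :
  v1 != v2 -> v1 != v3 -> v2 != v3 -> c1 != c2 -> c1 != c3 -> c2 != c3 ->
  e v1 c1 -> e v2 c1 -> e v2 c2 -> e v3 c2 -> e v3 c3 -> e v1 c3 ->
  is_cycle G [:: inl v1; inr c1; inl v2; inr c2; inl v3; inr c3].
Proof.
move=> n12 n13 n23 m12 m13 m23 e11 e21 e22 e32 e33 e13.
rewrite /is_cycle /= !inE -!sum_eqE /= !orbF !negb_or.
by rewrite n12 n13 n23 m12 m13 m23 e11 e21 e22 e32 e33 e13.
Qed.

Lemma bip_cycle_card_gt0 s : is_cycle G s -> 0 < #|Vc|.
Proof.
case: s => [|x [|y s]] //= /andP[_] /andP[].
by case: x y => [v|c] [v'|c'] //= _ _; apply/card_gt0P; [exists v | exists v'].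
Qed.

Lemma biregular_double_count wc wr : biregular e wc wr -> wc * #|Vc| = wr * #|Vr|.
Proof.
case=> deg_c deg_r.
have -> : wc * #|Vc| = \sum_v \sum_(r | e v r) 1.
  by rewrite mulnC -sum_nat_const; apply: eq_bigr => v _; rewrite sum1dep_card deg_c.
rewrite (exchange_big_dep predT) //= mulnC -sum_nat_const.
by apply: eq_bigr => r _; rewrite sum1dep_card deg_r.
Qed.

Variable v0 : Vc.

(* The triple (c, (v, r)) stands for the walk v0 - c - v - r. *)
Definition nb_walk3 : {set Vr * (Vc * Vr)} :=
  [set p | [&& e v0 p.1, (p.2.1 != v0) && e p.2.1 p.1
                       & (p.2.2 != p.1) && e p.2.1 p.2.2]].

Lemma card_nb_walk3 wc wr :
  biregular e wc wr -> #|nb_walk3| = wc * ((wr - 1) * (wc - 1)).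
Proof.
case=> deg_c deg_r.
have -> : #|nb_walk3| = \sum_(c | e v0 c) \sum_(v | (v != v0) && e v c)
                           \sum_(r | (r != c) && e v r) 1.
  by under eq_bigr => c _ do rewrite pair_big_dep; rewrite pair_big_dep sum1dep_card.
rewrite (eq_bigr (fun=> (wr - 1) * (wc - 1))) ?sum_nat_const_dep ?deg_c // => c ec.
rewrite (eq_bigr (fun=> wc - 1)) ?sum_nat_const_dep => [|v /andP[_ evc]].
  by rewrite (card_setD1_pred (A := e^~ c)) // deg_r.
by rewrite sum1dep_card (card_setD1_pred (A := e v)) // deg_c.
Qed.

Hypothesis no_short_cycle : forall s, is_cycle G s -> 8 <= size s.

Lemma common_check_unique v1 v2 c1 c2 :
  v1 != v2 -> e v1 c1 -> e v2 c1 -> e v1 c2 -> e v2 c2 -> c1 = c2.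
Proof.
move=> nv e11 e21 e12 e22; apply/eqP/negPn/negP => nc.
by have := no_short_cycle (bip_cycle4 nv nc e11 e21 e22 e12).
Qed.

Lemma nb_walk3_end_inj : {in nb_walk3 &, injective (fun p => p.2.2)}.
Proof.
move=> [c [v r]] [c' [v' r']]; rewrite !inE /=.
move=> /and3P[ec /andP[nv evc] /andP[nr evr]].
move=> /and3P[ec' /andP[nv' evc'] /andP[nr' evr']] Er; subst r'.
have [Ec | ncc] := eqVneq c c'.
  subst c'; have [<- // | nvv] := eqVneq v v'.
  by move: nr; rewrite (common_check_unique nvv evc evc' evr evr') eqxx.
rewrite eq_sym in nv; rewrite eq_sym in nv'.
have [Ev | nvv] := eqVneq v v'.
  subst v'.
  by move: ncc; rewrite (common_check_unique nv ec evc ec' evc') eqxx.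
rewrite eq_sym in nr.
by have := no_short_cycle (bip_cycle6 nv nv' nvv nr ncc nr' ec evc evr evr' evc' ec').
Qed.

Lemma nb_walk3_end_notin p : p \in nb_walk3 -> ~~ e v0 p.2.2.
Proof.
case: p => [c [v r]]; rewrite inE /= => /and3P[ec /andP[nv evc] /andP[nr evr]].
apply/negP => er; rewrite eq_sym in nv.
by move: nr; rewrite (common_check_unique nv ec evc er evr) eqxx.
Qed.

Lemma moore_bound_checks wc wr :
  biregular e wc wr -> wc + wc * ((wr - 1) * (wc - 1)) <= #|Vr|.
Proof.
move=> reg; set ends := [set p.2.2 | p in nb_walk3].
have disj : [set r | e v0 r] :&: ends = set0.
  apply/setP => r; rewrite !inE; apply/negbTE/andP.
  by move=> -[er /imsetP[p /nb_walk3_end_notin + Er]]; rewrite -Er er.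
rewrite -{1}(reg.1 v0) -(card_nb_walk3 reg) -(card_in_imset nb_walk3_end_inj).
by have := cardsUI [set r | e v0 r] ends; rewrite disj cards0 addn0 => <-; apply: max_card.
Qed.

End BipartiteGirth.

Local Open Scope ring_scope.

Lemma quadratic_root_le (R : rcfType) (b c x : R) :
  0 <= c -> 0 < x -> c <= x ^+ 2 + b * x ->
  (- b + Num.sqrt (b ^+ 2 + 4 * c)) / 2 <= x.
Proof.
move=> c_ge0 x_gt0 le_c.
have b2x_ge0 : 0 <= 2 * x + b by nra.
suff : Num.sqrt (b ^+ 2 + 4 * c) <= 2 * x + b by lra.
have D_ge0 : 0 <= b ^+ 2 + 4 * c by have := sqr_ge0 b; lra.
by rewrite -(ler_pXn2r (n := 2)) ?nnegrE ?sqrtr_ge0 // sqr_sqrtr //; nra.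
Qed.

Lemma moore_bound_quadratic (R : realDomainType) (w wr n m : nat) :
  (0 < w)%N -> (w <= wr)%N -> (w * n = wr * m)%N ->
  (w + w * ((wr - 1) * (w - 1)) <= m)%N ->
  w%:R ^+ 2 * (w%:R - 1) * n%:R <= m%:R ^+ 2 + w%:R * (w%:R - 2) * m%:R :> R.
Proof.
move=> w_gt0 le_w_wr count moore.
have countR : w%:R * n%:R = wr%:R * m%:R :> R by rewrite -!natrM count.
have wr_gt0 : (0 < wr)%N := leq_trans w_gt0 le_w_wr.
move: moore; rewrite -(ler_nat R) !(natrD, natrM, natrB) // => mooreR.
have -> : w%:R ^+ 2 * (w%:R - 1) * n%:R = w%:R * (w%:R - 1) * (wr%:R * m%:R) :> R.
  by rewrite -countR; ring.
by have := ler_wpM2l (ler0n R m) mooreR; lra.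
Qed.

Theorem theorem1 (R : rcfType) (wc wr : nat) (Vc Vr : finType)
  (e : Vc -> Vr -> bool) :
  (wc <= wr)%N ->
  biregular e wc wr ->
  girth_eq (bip_adj e) 8 ->
  (- (wc%:R * (wc%:R - 2)) +
     wc%:R * Num.sqrt ((wc%:R - 2) ^+ 2 + 4 * (wc%:R - 1) * (#|Vc|)%:R)) / 2
  <= (#|Vr|)%:R :> R.
Proof.
move=> le_wc_wr reg [[s [cyc _]] girth8].
have [-> | wc_gt0] := posnP wc; first by rewrite !mul0r oppr0 add0r mul0r ler0n.
have [v0 _] := card_gt0P (bip_cycle_card_gt0 cyc).
have moore := moore_bound_checks v0 girth8 reg.
have quad := moore_bound_quadratic R wc_gt0 le_wc_wr (biregular_double_count reg) moore.
rewrite -[X in X * Num.sqrt _]ger0_norm ?ler0n // -sqrtr_sqr -sqrtrM ?sqr_ge0 //.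
rewrite (_ : wc%:R ^+ 2 * _ = (wc%:R * (wc%:R - 2)) ^+ 2 +
                              4 * (wc%:R ^+ 2 * (wc%:R - 1) * #|Vc|%:R)); last by ring.
apply: quadratic_root_le quad.
- by rewrite !mulr_ge0 ?subr_ge0 ?ler1n ?sqr_ge0.
- by rewrite ltr0n (leq_trans wc_gt0 (leq_trans (leq_addr _ _) moore)).
Qed.
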